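(* With the construction below, for every $n\ge n_0$ and every $y\in M$ with $0<d(\bar x,y)<\dfrac{\rho_n}{n(n+1)}$, we have $\overline d(x_n,y)>\rho_n$.
   Context: Let $(M,d)$ be a metric space, $\bar x\in M$, and $(x_n)_{n\ge1}$ a sequence of distinct points of $M\setminus\{\bar x\}$ with $d(x_n,\bar x)\to0$. Set $\rho_n=\frac{n}{n+1}d(x_n,\bar x)$ and assume $(\rho_n)_{n\ge1}$ is strictly decreasing. Fix $0<c<1$ and an integer $n_0\ge1$ with $c(n_0+1)<n_0$. Define $\theta(x,y)=\rho_n$ if $\{x,y\}=\{x_n,\bar x\}$ for some $n\ge n_0$, and $\theta(x,y)=d(x,y)$ otherwise. Define $\overline d(x,y)=\inf\sum_{i=0}^{N-1}\theta(a_i,a_{i+1})$, the infimum over all $N\ge1$ and all chains $a_0=x,a_1,\dots,a_N=y$ in $M$. *)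

From Stdlib Require Import Reals Lra List Classical ClassicalEpsilon.
Open Scope R_scope.

Definition is_metric {M : Type} (d : M -> M -> R) : Prop :=
  (forall x y, 0 <= d x y) /\
  (forall x y, d x y = 0 <-> x = y) /\
  (forall x y, d x y = d y x) /\
  (forall x y z, d x z <= d x y + d y z).

Definition rho {M : Type} (d : M -> M -> R) (xs : nat -> M) (xb : M) (n : nat) : R :=
  INR n / INR (n + 1) * d (xs n) xb.

Definition is_special_pair {M : Type} (xs : nat -> M) (xb : M) (n0 : nat)
  (x y : M) (n : nat) : Prop :=
  (n0 <= n)%nat /\ ((x = xs n /\ y = xb) \/ (x = xb /\ y = xs n)).

(* theta(x,y) = rho_n if {x,y} = {x_n, xbar} for some n >= n0, else d(x,y).
   (Such n is unique since the x_n are distinct.) *)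
Definition theta {M : Type} (d : M -> M -> R) (xs : nat -> M) (xb : M) (n0 : nat)
  (x y : M) : R :=
  match excluded_middle_informative
          (exists n, is_special_pair xs xb n0 x y n) with
  | left H => rho d xs xb (proj1_sig (constructive_indefinite_description _ H))
  | right _ => d x y
  end.

(* Sum of theta along the chain x = a_0, a_1, ..., a_N where l = [a_1; ...; a_N]. *)
Fixpoint chain_sum {M : Type} (t : M -> M -> R) (x : M) (l : list M) : R :=
  match l with
  | nil => 0
  | a :: l' => t x a + chain_sum t a l'
  end.

Definition chain_sums {M : Type} (t : M -> M -> R) (x y : M) : R -> Prop :=
  fun s => exists l : list M, l <> nil /\ last l x = y /\ s = chain_sum t x l.

Definition is_inf (S : R -> Prop) (r : R) : Prop :=
  (forall s, S s -> r <= s) /\ (forall b, (forall s, S s -> b <= s) -> b <= r).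

(* dbar(x,y) = inf of chain sums (the infimum exists: nonempty, bounded below by 0). *)
Definition dbar {M : Type} (d : M -> M -> R) (xs : nat -> M) (xb : M) (n0 : nat)
  (x y : M) : R :=
  epsilon (inhabits 0) (fun r => is_inf (chain_sums (theta d xs xb n0) x y) r).

From Stdlib Require Import Reals Lra List Classical ClassicalEpsilon Lia.
Open Scope R_scope.

(* A function h with h a - h b <= theta a b satisfies h x - h y <= dbar x y, so
   it suffices to exhibit such an h with h y = 0 and h (x_n) > rho_n.  We take
   h z = min (d(z,y), c d(xbar,y) + min (n/(n+1) d(z,xbar), rho_n)): the second
   term is chosen so that h changes by at most rho_m across every shortcut
   {x_m, xbar}, using rho_m >= c d(x_m,xbar) and the monotonicity of rho. *)

Lemma last_cons {A : Type} (a x : A) (l : list A) : last (a :: l) x = last l a.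
Proof.
  revert a x. induction l as [|b l IH]; intros a x; [reflexivity|].
  change (last (b :: l) x = last (b :: l) a). now rewrite !IH.
Qed.

Lemma chain_sum_ge_sub {M : Type} (t : M -> M -> R) (h : M -> R)
  (Hh : forall a b, h a - h b <= t a b) :
  forall l x, h x - h (last l x) <= chain_sum t x l.
Proof.
  induction l as [|a l IH]; intros x; simpl chain_sum.
  - simpl. lra.
  - rewrite last_cons. specialize (IH a). specialize (Hh x a). lra.
Qed.

Lemma is_inf_exists (S : R -> Prop) (b : R) :
  (exists s, S s) -> (forall s, S s -> b <= s) -> exists r, is_inf S r.
Proof.
  intros [s0 Hs0] Hb.
  set (E := fun u => S (- u)).
  assert (HE : bound E) by (exists (- b); intros u Hu; apply Hb in Hu; lra).
  assert (Hne : exists u, E u) by (exists (- s0); unfold E; now rewrite Ropp_involutive).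
  destruct (completeness E HE Hne) as [m [Hub Hlub]].
  exists (- m). split.
  - intros s Hs. assert (Hs' : E (- s)) by (unfold E; now rewrite Ropp_involutive).
    apply Hub in Hs'. lra.
  - intros b' Hb'. assert (m <= - b') by (apply Hlub; intros u Hu; apply Hb' in Hu; lra).
    lra.
Qed.

Lemma dbar_ge {M : Type} (d : M -> M -> R) xs xb n0 (x y : M) (b : R) :
  (forall s, chain_sums (theta d xs xb n0) x y s -> b <= s) ->
  b <= dbar d xs xb n0 x y.
Proof.
  intros Hb.
  assert (Hne : exists s, chain_sums (theta d xs xb n0) x y s)
    by (exists (chain_sum (theta d xs xb n0) x (y :: nil)), (y :: nil); now split).
  destruct (epsilon_spec (inhabits 0) _ (is_inf_exists _ b Hne Hb)) as [_ Hglb].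
  exact (Hglb b Hb).
Qed.

Lemma dbar_ge_sub {M : Type} (d : M -> M -> R) xs xb n0 (h : M -> R) (x y : M) :
  (forall a b, h a - h b <= theta d xs xb n0 a b) ->
  h x - h y <= dbar d xs xb n0 x y.
Proof.
  intros Hh. apply dbar_ge. intros s [l [_ [Hl ->]]].
  rewrite <- Hl. apply chain_sum_ge_sub, Hh.
Qed.

Lemma theta_lipschitz {M : Type} (d : M -> M -> R) xs xb n0 (h : M -> R) :
  (forall a b, h a - h b <= d a b) ->
  (forall m, (n0 <= m)%nat ->
     h (xs m) - h xb <= rho d xs xb m /\ h xb - h (xs m) <= rho d xs xb m) ->
  forall a b, h a - h b <= theta d xs xb n0 a b.
Proof.
  intros Hd Hspecial a b. unfold theta.
  destruct (excluded_middle_informative _) as [H|_]; [|apply Hd].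
  destruct (constructive_indefinite_description _ H) as [m [Hm [[-> ->]|[-> ->]]]];
    simpl; apply Hspecial in Hm; lra.
Qed.

Lemma Rmin_sub_le (a b a' b' D : R) :
  a - a' <= D -> b - b' <= D -> Rmin a b - Rmin a' b' <= D.
Proof. unfold Rmin. destruct (Rle_dec a b), (Rle_dec a' b'); lra. Qed.

Section Potential.

Context {M : Type} (d : M -> M -> R).
Hypothesis Hmetric : is_metric d.
Variables (y xb : M) (a k r : R).
Hypotheses (Ha : 0 <= a) (Hk : 0 <= k <= 1) (Hr : 0 <= r).

Definition potential (z : M) : R := Rmin (d z y) (a + Rmin (k * d z xb) r).

Lemma potential_lipschitz (u v : M) : potential u - potential v <= d u v.
Proof.
  destruct Hmetric as [Hpos [_ [_ Htri]]].
  assert (k * d u xb <= k * d u v + k * d v xb) by (specialize (Htri u v xb); nra).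
  assert (k * d u v <= d u v) by (specialize (Hpos u v); nra).
  apply Rmin_sub_le; [specialize (Htri u v y); lra|].
  replace (a + Rmin (k * d u xb) r - (a + Rmin (k * d v xb) r))
    with (Rmin (k * d u xb) r - Rmin (k * d v xb) r) by ring.
  apply Rmin_sub_le; [lra|]. specialize (Hpos u v). lra.
Qed.

Lemma potential_target : potential y = 0.
Proof.
  destruct Hmetric as [Hpos [Hzero _]].
  unfold potential. rewrite (proj2 (Hzero y y) eq_refl). apply Rmin_left.
  assert (0 <= Rmin (k * d y xb) r) by (apply Rmin_glb; [specialize (Hpos y xb); nra | lra]).
  lra.
Qed.

Lemma potential_center : a <= d xb y -> potential xb = a.
Proof.
  destruct Hmetric as [_ [Hzero _]].
  intros Hay. unfold potential. rewrite (proj2 (Hzero xb xb) eq_refl), Rmult_0_r.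
  rewrite (Rmin_left 0 r), Rplus_0_r by lra. now apply Rmin_right.
Qed.

End Potential.

Lemma INR_frac_le (m n : nat) : (m <= n)%nat -> INR m / (INR m + 1) <= INR n / (INR n + 1).
Proof.
  intros Hmn. apply le_INR in Hmn. pose proof (pos_INR m).
  replace (INR m / (INR m + 1)) with (1 - / (INR m + 1)) by (field; lra).
  replace (INR n / (INR n + 1)) with (1 - / (INR n + 1)) by (field; lra).
  apply Rplus_le_compat_l, Ropp_le_contravar, Rinv_le_contravar; lra.
Qed.

Lemma decreasing_from_1 (u : nat -> R) :
  (forall n, (1 <= n)%nat -> u (S n) < u n) ->
  forall m n, (1 <= m)%nat -> (m < n)%nat -> u n < u m.
Proof.
  intros Hdec m n Hm Hmn. induction Hmn as [|n Hmn IH].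
  - now apply Hdec.
  - specialize (Hdec n ltac:(lia)). lra.
Qed.

Lemma INR_frac_bounds (n : nat) : 0 <= INR n / (INR n + 1) <= 1.
Proof.
  pose proof (pos_INR n).
  replace (INR n / (INR n + 1)) with (1 - / (INR n + 1)) by (field; lra).
  assert (0 < / (INR n + 1) <= 1).
  { split; [apply Rinv_0_lt_compat; lra|].
    rewrite <- Rinv_1. apply Rinv_le_contravar; lra. }
  lra.
Qed.

Section Rho.

Context {M : Type} (d : M -> M -> R) (xs : nat -> M) (xb : M).
Hypothesis Hpos : forall u v, 0 <= d u v.

Lemma rho_eq (m : nat) : rho d xs xb m = INR m / (INR m + 1) * d (xs m) xb.
Proof. unfold rho. now rewrite plus_INR. Qed.

Lemma rho_nonneg (m : nat) : 0 <= rho d xs xb m.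
Proof. rewrite rho_eq. apply Rmult_le_pos; [apply INR_frac_bounds | apply Hpos]. Qed.

Lemma rho_ge_mul (c : R) (n0 m : nat) :
  c * (INR n0 + 1) < INR n0 -> (n0 <= m)%nat -> c * d (xs m) xb <= rho d xs xb m.
Proof.
  intros Hc Hm. rewrite rho_eq. apply Rmult_le_compat_r; [apply Hpos|].
  pose proof (pos_INR n0).
  assert (c < INR n0 / (INR n0 + 1)) by (apply Rmult_lt_reg_r with (INR n0 + 1);
    [lra| unfold Rdiv; rewrite Rmult_assoc, Rinv_l; lra]).
  pose proof (INR_frac_le n0 m Hm). lra.
Qed.

Lemma rho_ge_min (n m : nat) :
  (forall j, (1 <= j)%nat -> rho d xs xb (S j) < rho d xs xb j) -> (1 <= m)%nat ->
  Rmin (INR n / (INR n + 1) * d (xs m) xb) (rho d xs xb n) <= rho d xs xb m.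
Proof.
  intros Hdec Hm. destruct (Compare_dec.le_lt_dec n m) as [Hnm|Hmn].
  - eapply Rle_trans; [apply Rmin_l|]. rewrite rho_eq.
    apply Rmult_le_compat_r; [apply Hpos|]. now apply INR_frac_le.
  - eapply Rle_trans; [apply Rmin_r|]. left. now apply decreasing_from_1.
Qed.

End Rho.

Section Construction.

Context {M : Type} (d : M -> M -> R) (xb : M) (xs : nat -> M) (c : R) (n0 : nat).
Hypothesis Hmetric : is_metric d.
Hypothesis Hdec : forall n, (1 <= n)%nat -> rho d xs xb (S n) < rho d xs xb n.
Hypothesis Hc : 0 < c < 1.
Hypothesis Hn0 : (1 <= n0)%nat.
Hypothesis Hcn0 : c * (INR n0 + 1) < INR n0.
Variables (n : nat) (y : M).

Let h : M -> R :=
  potential d y xb (c * d xb y) (INR n / (INR n + 1)) (rho d xs xb n).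

Lemma potential_center_eq : h xb = c * d xb y.
Proof.
  destruct Hmetric as [Hpos _]. apply potential_center; [exact Hmetric| |].
  - exact (rho_nonneg d xs xb Hpos n).
  - specialize (Hpos xb y). nra.
Qed.

Lemma potential_shortcut (m : nat) : (n0 <= m)%nat ->
  h (xs m) - h xb <= rho d xs xb m /\ h xb - h (xs m) <= rho d xs xb m.
Proof.
  intros Hm. pose proof Hmetric as [Hpos [_ [Hsym Htri]]].
  rewrite potential_center_eq. unfold h, potential. split.
  - pose proof (rho_ge_min d xs xb Hpos n m Hdec ltac:(lia)).
    pose proof (Rmin_r (d (xs m) y)
      (c * d xb y + Rmin (INR n / (INR n + 1) * d (xs m) xb) (rho d xs xb n))).
    lra.
  - pose proof (rho_ge_mul d xs xb Hpos c n0 m Hcn0 Hm).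
    assert (0 <= Rmin (INR n / (INR n + 1) * d (xs m) xb) (rho d xs xb n)).
    { apply Rmin_glb; [|exact (rho_nonneg d xs xb Hpos n)].
      apply Rmult_le_pos; [apply INR_frac_bounds | apply Hpos]. }
    set (g := Rmin _ (rho d xs xb n)) in *.
    pose proof (Htri xb (xs m) y). rewrite (Hsym xb (xs m)) in *.
    assert (c * d xb y - d (xs m) y <= c * d (xs m) xb)
      by (pose proof (Hpos (xs m) y); nra).
    unfold Rmin. pose proof (rho_nonneg d xs xb Hpos m). destruct (Rle_dec _ _); lra.
Qed.

Lemma potential_source_gt :
  (1 <= n)%nat -> 0 < d xb y < rho d xs xb n / (INR n * (INR n + 1)) ->
  rho d xs xb n < h (xs n).
Proof.
  intros Hn [Hy0 Hy]. pose proof Hmetric as [Hpos [_ [Hsym Htri]]].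
  assert (Hn1 : 1 <= INR n) by (apply le_INR in Hn; simpl in Hn; lra).
  set (dn := d (xs n) xb) in *.
  assert (Hrho : rho d xs xb n = INR n / (INR n + 1) * dn) by apply rho_eq.
  assert (Hgap : d xb y * (INR n + 1) < dn).
  { rewrite Hrho in Hy.
    replace (INR n / (INR n + 1) * dn / (INR n * (INR n + 1)))
      with (dn / ((INR n + 1) * (INR n + 1))) in Hy by (field; lra).
    apply Rmult_lt_compat_r with (r := (INR n + 1) * (INR n + 1)) in Hy; [|nra].
    replace (dn / ((INR n + 1) * (INR n + 1)) * ((INR n + 1) * (INR n + 1)))
      with dn in Hy by (field; lra).
    nra. }
  unfold h, potential. fold dn. rewrite <- Hrho, (Rmin_right (rho d xs xb n)) by lra.
  apply Rmin_glb_lt; [|nra].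
  pose proof (Htri (xs n) y xb) as Htri_n.
  rewrite (Hsym y xb) in Htri_n. fold dn in Htri_n.
  rewrite Hrho.
  replace (INR n / (INR n + 1) * dn) with (dn - dn / (INR n + 1)) by (field; lra).
  apply Rmult_lt_compat_r with (r := / (INR n + 1)) in Hgap;
    [|apply Rinv_0_lt_compat; lra].
  rewrite Rmult_assoc, Rinv_r in Hgap by lra. unfold Rdiv. lra.
Qed.

End Construction.

Theorem lemma7p3 (M : Type) (d : M -> M -> R) (xb : M) (xs : nat -> M)
  (c : R) (n0 : nat)
  (Hmetric : is_metric d)
  (Hdistinct : forall m n, (1 <= m)%nat -> (1 <= n)%nat -> m <> n -> xs m <> xs n)
  (Hneq : forall n, (1 <= n)%nat -> xs n <> xb)
  (Hconv : Un_cv (fun n => d (xs n) xb) 0)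
  (Hdec : forall n, (1 <= n)%nat -> rho d xs xb (S n) < rho d xs xb n)
  (Hc : 0 < c < 1)
  (Hn0 : (1 <= n0)%nat)
  (Hcn0 : c * (INR n0 + 1) < INR n0) :
  forall n : nat, (n0 <= n)%nat ->
  forall y : M,
    0 < d xb y < rho d xs xb n / (INR n * (INR n + 1)) ->
    dbar d xs xb n0 (xs n) y > rho d xs xb n.
Proof.
  intros n Hn y Hy.
  set (h := potential d y xb (c * d xb y) (INR n / (INR n + 1)) (rho d xs xb n)).
  assert (Hlip : forall a b, h a - h b <= theta d xs xb n0 a b).
  { apply theta_lipschitz.
    - apply potential_lipschitz; [exact Hmetric | apply INR_frac_bounds].
    - intros m Hm. now apply (potential_shortcut d xb xs c n0). }
  assert (Hhy : h y = 0).
  { pose proof (proj1 Hmetric) as Hpos.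
    apply potential_target; [exact Hmetric | | apply INR_frac_bounds | apply rho_nonneg, Hpos].
    specialize (Hpos xb y). nra. }
  pose proof (dbar_ge_sub d xs xb n0 h (xs n) y Hlip) as Hdbar.
  pose proof (potential_source_gt d xb xs c Hmetric Hc n y ltac:(lia) Hy).
  unfold h in *. lra.
Qed.
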